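(* Let $A$ be a general metric space, $\mathcal F$ a weakly flat filter on $A$ and $M$ a left module on $A$ such that $M^-(\mathcal F)(x)<M(x)$ for some $x\in A$. Then there is a forward Cauchy sequence $(y_n)$ in $A$ such that $(y_n)\to\mathcal F$ and $M^-((y_n))(x)<M(x)$ for some $x\in A$ (where $M^-((y_n))$ is $M^-$ of the filter of the sequence).
   Context: A general metric space $A$ is a set with $A(-,-):A\times A\to[0,\infty]$, $A(x,x)=0$, $A(x,z)\le A(x,y)+A(y,z)$. A left module is $M:A\to[0,\infty]$ with $M(x)\le M(y)+A(x,y)$. A filter on $A$ is a nonempty set of nonempty subsets closed under finite intersections and supersets; $M^-(\mathcal F)(x)=\sup_{f\in\mathcal F}\inf_{y\in f}A(x,y)$. $\mathcal F$ is weakly flat iff for every $\epsilon>0$ there is $f\in\mathcal F$ such that for all $x\in f$ and all $g\in\mathcal F$ there is $y\in g$ with $A(x,y)\le\epsilon$. For weakly flat filters, $\mathcal F_1\to\mathcal F_2$ iff for every $\epsilon>0$ there is $f\in\mathcal F_1$ such that for every $x\in f$ and every $g\in\mathcal F_2$ there is $y\in g$ with $A(x,y)\le\epsilon$. The filter of a sequence $(y_n)$ is generated by the tails $\{y_p:p\ge n\}$; $(y_n)$ is forward Cauchy iff for every $\epsilon>0$ there is $N$ with $A(y_n,y_m)\le\epsilon$ whenever $m\ge n\ge N$. *)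

From HB Require Import structures.
From mathcomp Require Import all_boot all_order all_algebra.
From mathcomp Require Import boolp classical_sets reals constructive_ereal ereal.
Set Implicit Arguments. Unset Strict Implicit. Unset Printing Implicit Defensive.
Import Order.TTheory GRing.Theory Num.Theory.
Local Open Scope classical_set_scope.
Local Open Scope ring_scope.
Local Open Scope ereal_scope.

Section GMet.
Context {R : realType} {T : Type}.

Definition is_gen_metric (d : T -> T -> \bar R) : Prop :=
  [/\ (forall x y, 0 <= d x y),
      (forall x, d x x = 0) &
      (forall x y z, d x z <= d x y + d y z)].

Definition is_left_module (d : T -> T -> \bar R) (M : T -> \bar R) : Prop :=
  (forall x, 0 <= M x) /\ (forall x y, M x <= M y + d x y).

Definition is_filter (F : set (set T)) : Prop :=
  [/\ F !=set0,
      (forall f, F f -> f !=set0),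
      (forall f g, F f -> F g -> F (f `&` g)) &
      (forall f g, F f -> f `<=` g -> F g)].

Definition Mminus (d : T -> T -> \bar R) (F : set (set T)) (x : T) : \bar R :=
  ereal_sup [set ereal_inf [set d x y | y in f] | f in F].

Definition weakly_flat (d : T -> T -> \bar R) (F : set (set T)) : Prop :=
  forall eps : R, (0 < eps)%R -> exists2 f, F f &
    forall x, f x -> forall g, F g -> exists2 y, g y & d x y <= eps%:E.

Definition filter_conv (d : T -> T -> \bar R) (F1 F2 : set (set T)) : Prop :=
  forall eps : R, (0 < eps)%R -> exists2 f, F1 f &
    forall x, f x -> forall g, F2 g -> exists2 y, g y & d x y <= eps%:E.

Definition seq_filter (y : nat -> T) : set (set T) :=
  [set f | exists n : nat, forall p : nat, (n <= p)%N -> f (y p)].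

Definition forward_cauchy (d : T -> T -> \bar R) (y : nat -> T) : Prop :=
  forall eps : R, (0 < eps)%R -> exists N : nat,
    forall n m : nat, (N <= n)%N -> (n <= m)%N -> d (y n) (y m) <= eps%:E.

End GMet.

(* Let c lie strictly between M^-(F)(x) and M(x).  Some f_0 in F contains y_0 with
   d(x, y_0) < c, and weak flatness with tolerances del/2^(n+1) yields sets f_n in F
   from which every point reaches every member of F, in particular f_(n+1), within
   del/2^(n+1).  Walking from f_n to f_(n+1) gives a sequence with
   d(y_n, y_m) <= del/2^n for n <= m: it is forward Cauchy, it converges to F because
   its tails lie in the f_n, and every tail stays within c + del of x. *)
From mathcomp Require Import all_boot all_order all_algebra.
From mathcomp Require Import boolp classical_sets reals constructive_ereal ereal.
From mathcomp Require Import ring lra.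
Set Implicit Arguments.
Unset Strict Implicit.
Unset Printing Implicit Defensive.
Import Order.TTheory GRing.Theory Num.Theory.
Local Open Scope classical_set_scope.
Local Open Scope ring_scope.
Local Open Scope ereal_scope.

Lemma lte_dense_fin {R : realType} (a z : \bar R) :
  a < z -> exists r : R, a < r%:E < z.
Proof.
case: a => [a||]; case: z => [z||] //=.
- rewrite lte_fin => az; exists ((a + z) / 2)%R; rewrite !lte_fin; apply/andP; split; lra.
- by move=> _; exists (a + 1)%R; rewrite lte_fin ltry andbT; lra.
- by move=> _; exists (z - 1)%R; rewrite lte_fin ltNyr /=; lra.
- by move=> _; exists 0%R; rewrite ltNyr ltry.
Qed.

Lemma dependent_choice_seq {T : Type} (P : nat -> T -> Prop)
    (Q : nat -> T -> T -> Prop) (x0 : T) :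
  (forall n x, P n x -> exists z, P n.+1 z /\ Q n x z) -> P 0%N x0 ->
  exists y : nat -> T, y 0%N = x0 /\ forall n, P n (y n) /\ Q n (y n) (y n.+1).
Proof.
move=> step P0.
have /choice [next hnext] : forall p : nat * T, exists z,
    P p.1 p.2 -> P p.1.+1 z /\ Q p.1 p.2 z.
  move=> [n x] /=; have [/step [z hz]|nPx] := pselect (P n x).
  - by exists z.
  - by exists x.
pose y := fix y n := if n is k.+1 then next (k, y k) else x0.
have Py : forall n, P n (y n) by elim=> [//|n IH]; exact: (hnext (n, y n) IH).1.
exists y; split=> [//|n].
by split; [exact: Py | exact: (hnext (n, y n) (Py n)).2].
Qed.

Section Halving.
Context {R : realType} (del : R).
Local Open Scope ring_scope.
Hypothesis del_gt0 : 0 < del.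

Definition halving (n : nat) : R := del / (2 ^ n)%:R.

Lemma halving_gt0 n : 0 < halving n.
Proof. by apply: divr_gt0 => //; rewrite ltr0n expn_gt0. Qed.

Lemma halvingS n : halving n = 2 * halving n.+1.
Proof.
have : (2 ^ n)%:R != 0 :> R by rewrite pnatr_eq0 -lt0n expn_gt0.
by rewrite /halving expnS natrM => ?; field.
Qed.

Lemma halving_le n m : (n <= m)%N -> halving m <= halving n.
Proof.
move=> /subnKC <-; elim: (m - n)%N => [|k IH]; first by rewrite addn0.
rewrite addnS; apply: le_trans IH.
by have := halvingS (n + k); have := halving_gt0 (n + k).+1; lra.
Qed.

Lemma halving_small eps : 0 < eps -> exists N, halving N <= eps.
Proof.
move=> eps_gt0; have /archi_boundP : 0 <= del / eps by rewrite divr_ge0 // ltW.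
rewrite ltr_pdivrMr // => /ltW del_le; exists (Num.bound (del / eps)).
rewrite /halving ler_pdivrMr ?ltr0n ?expn_gt0 // mulrC.
by apply: (le_trans del_le); apply: ler_wpM2r; [exact: ltW | rewrite ler_nat ltnW // ltn_expl].
Qed.

End Halving.

Section SequenceToFilter.
Context {R : realType} {T : Type} (d : T -> T -> \bar R).

Lemma Mminus_lt_witness (F : set (set T)) x c f :
  Mminus d F x < c -> F f -> exists2 y, f y & d x y < c.
Proof.
move=> Fxc Ff; have : ereal_inf [set d x y | y in f] < c.
  by apply: le_lt_trans Fxc; apply: ereal_sup_ubound; exists f.
by move=> /ereal_inf_lt [_ [y fy <-] dxy]; exists y.
Qed.

Lemma weakly_flat_seq (F : set (set T)) (e : nat -> R) :
  weakly_flat d F -> (forall n, 0 < e n)%R ->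
  exists fs : nat -> set T, forall n, F (fs n) /\
    forall x, fs n x -> forall g, F g -> exists2 y, g y & d x y <= (e n)%:E.
Proof.
move=> wf e_gt0.
have near_sets n : exists f, F f /\
    forall x, f x -> forall g, F g -> exists2 y, g y & d x y <= (e n)%:E.
  by have [f Ff hf] := wf _ (e_gt0 n); exists f.
by have [fs hfs] := choice near_sets; exists fs.
Qed.

Hypothesis d_refl : forall x, d x x = 0.
Hypothesis d_triangle : forall x y z, d x z <= d x y + d y z.

Variables (del : R) (y : nat -> T).
Hypothesis del_gt0 : (0 < del)%R.
Hypothesis y_step : forall n, d (y n) (y n.+1) <= (halving del n.+1)%:E.

Lemma halving_chain n m : (n <= m)%N -> d (y n) (y m) <= (halving del n)%:E.
Proof.
have telescope k : d (y n) (y (n + k)%N) <= (halving del n - halving del (n + k))%:E.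
  elim: k => [|k IH]; first by rewrite addn0 d_refl subrr.
  rewrite addnS; apply: (le_trans (d_triangle _ (y (n + k)%N) _)).
  apply: (le_trans (leeD IH (y_step (n + k)%N))).
  by rewrite -EFinD lee_fin; have := halvingS del (n + k); lra.
move=> /subnKC <-; apply: (le_trans (telescope _)).
by rewrite lee_fin; have := halving_gt0 del_gt0 (n + (m - n)); lra.
Qed.

Lemma halving_chain_forward_cauchy : forward_cauchy d y.
Proof.
move=> eps eps_gt0; have [N hN] := halving_small del_gt0 eps_gt0.
exists N => n m Nn nm; apply: (le_trans (halving_chain nm)).
by rewrite lee_fin (le_trans _ hN) // halving_le.
Qed.

Lemma Mminus_seq_filter_le x :
  Mminus d (seq_filter y) x <= d x (y 0%N) + (halving del 0)%:E.
Proof.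
apply: ge_ereal_sup => _ [f [n tail_f] <-].
apply: ge_ereal_inf; exists (d x (y n)); first by exists (y n) => //; exact: tail_f.
by apply: (le_trans (d_triangle _ (y 0%N) _)); rewrite leeD2l // halving_chain.
Qed.

Lemma seq_filter_conv (F : set (set T)) (fs : nat -> set T) :
  (forall n, fs n (y n)) ->
  (forall n x, fs n x -> forall g, F g ->
     exists2 z, g z & d x z <= (halving del n.+1)%:E) ->
  filter_conv d (seq_filter y) F.
Proof.
move=> y_fs fs_near eps eps_gt0; have [N hN] := halving_small del_gt0 eps_gt0.
exists [set x | exists2 p, (N <= p)%N & x = y p]; first by exists N => p Np; exists p.
move=> _ [p Np ->] g Fg; have [z gz dz] := fs_near p _ (y_fs p) g Fg.
by exists z => //; rewrite (le_trans dz) // lee_fin (le_trans _ hN) // halving_le // leqW.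
Qed.

End SequenceToFilter.

Theorem mainTheorem13 (R : realType) (T : Type) (d : T -> T -> \bar R)
  (F : set (set T)) (M : T -> \bar R) :
  is_gen_metric d -> is_filter F -> weakly_flat d F -> is_left_module d M ->
  (exists x : T, Mminus d F x < M x) ->
  exists y : nat -> T,
    [/\ forward_cauchy d y,
        filter_conv d (seq_filter y) F &
        exists x : T, Mminus d (seq_filter y) x < M x].
Proof.
move=> [_ d_refl d_triangle] _ wf _ [x Fx].
have [b /andP[Fxb bM]] := lte_dense_fin Fx.
have [c /andP[Fxc cb]] := lte_dense_fin Fxb.
have del_gt0 : (0 < b - c)%R by move: cb; rewrite lte_fin; lra.
have [fs hfs] := weakly_flat_seq wf (fun n => halving_gt0 del_gt0 n.+1).
have [y0 fs0y0 dxy0] := Mminus_lt_witness Fxc (hfs 0%N).1.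
have walk n u : fs n u -> exists v, fs n.+1 v /\ d u v <= (halving (b - c) n.+1)%:E.
  by move=> fs_u; have [v fv duv] := (hfs n).2 u fs_u _ (hfs n.+1).1; exists v.
have [y [y_0 hy]] := dependent_choice_seq walk fs0y0.
have y_step n : d (y n) (y n.+1) <= (halving (b - c) n.+1)%:E := (hy n).2.
exists y; split.
- exact: (halving_chain_forward_cauchy d_refl d_triangle del_gt0 y_step).
- exact: (seq_filter_conv del_gt0 (fun n => (hy n).1) (fun n => (hfs n).2)).
- exists x; apply: le_lt_trans bM.
  apply: (le_trans (Mminus_seq_filter_le d_refl d_triangle del_gt0 y_step x)).
  rewrite y_0; apply: (le_trans (leeD (ltW dxy0) (lexx _))).
  by rewrite -EFinD lee_fin /halving expn0 divr1 addrC subrK.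
Qed.
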